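(* There exists a distributionally robust constrained MDP (finite $\mathcal{S}$, $\mathcal{A}$, discount $\gamma\in[0,1)$, $(s,a)$-rectangular uncertainty set $\mathcal{P}$, reward $r$, and a single constraint reward $g$) for which there is no consistency operator that, for every $\lambda_t\ge0$, simultaneously satisfies: (i) linearity; and (ii) $\gamma$-contraction to the target, i.e. for every policy $\pi\in\Pi$, $\mathcal{T}^\pi$ is a $\gamma$-contraction in $\|\cdot\|_\infty$ whose unique fixed point is $V^\pi_r - \lambda_t V^\pi_g$. (The operator may depend on $\lambda_t$.)
   Context: A distributionally robust constrained MDP consists of finite sets $\mathcal{S},\mathcal{A}$, $\gamma\in[0,1)$, an $(s,a)$-rectangular uncertainty set $\mathcal{P}=\otimes_{(s,a)}\mathcal{P}_{s,a}$ with $\mathcal{P}_{s,a}\subseteq\Delta(\mathcal{S})$, reward $r:\mathcal{S}\times\mathcal{A}\to\mathbb{R}_{\ge0}$ and constraint reward $g:\mathcal{S}\times\mathcal{A}\to\mathbb{R}_{\ge0}$. $\Pi=\Delta(\mathcal{A})^{\mathcal{S}}$ is the set of stationary stochastic policies (including deterministic ones); $\pi[s,\cdot]\in\Delta(\mathcal{A})$. For a reward $u$, the robust value function is $V^\pi_u(s) = \min_{\mathcal{K}\in\otimes_{t\ge0}\mathcal{P}}\mathbb{E}_{\mathcal{K}}[\sum_{t\ge0}\gamma^t u(s_t,a_t)\mid s_0=s,\pi]$, the worst case over sequences of transition kernels from $\mathcal{P}$ (one per time step) with $a_t\sim\pi[s_t,\cdot]$. A consistency operator is a family of maps $\mathcal{T}^\pi:\mathbb{R}^{\mathcal{S}}\to\mathbb{R}^{\mathcal{S}}$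 indexed by $\pi\in\Pi$. It is linear if there is $f:\mathbb{R}^{\mathcal{S}}\to\mathbb{R}^{\mathcal{S}\times\mathcal{A}}$, independent of $\pi$, with $[\mathcal{T}^\pi v](s) = \langle\pi[s,\cdot], f(v)[s,\cdot]\rangle$ for all $\pi, v, s$. *)

From HB Require Import structures.
From mathcomp Require Import all_boot all_order all_algebra.
From mathcomp Require Import all_classical all_reals all_analysis.

Set Implicit Arguments.
Unset Strict Implicit.
Unset Printing Implicit Defensive.

Import Order.TTheory GRing.Theory Num.Theory numFieldNormedType.Exports.
Local Open Scope classical_set_scope.
Local Open Scope ring_scope.

Section DRCMDP.
Context {R : realType} {S A : finType}.

Definition is_dist (T : finType) (p : T -> R) : Prop :=
  (forall x, 0 <= p x) /\ \sum_(x : T) p x = 1.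

Definition is_policy (pi : S -> A -> R) : Prop := forall s, is_dist (pi s).

Definition kernel := S -> A -> S -> R.

Definition in_rect (Pset : S -> A -> set (S -> R)) (P : kernel) : Prop :=
  forall s a, Pset s a (P s a).

Definition in_rect_seq (Pset : S -> A -> set (S -> R)) (K : nat -> kernel) : Prop :=
  forall t, in_rect Pset (K t).

Fixpoint state_dist (K : nat -> kernel) (pi : S -> A -> R) (s0 : S) (t : nat) : S -> R :=
  match t with
  | 0 => fun s => (s == s0)%:R
  | t'.+1 => fun s' => \sum_(s : S) state_dist K pi s0 t' s *
                         \sum_(a : A) pi s a * K t' s a s'
  end.

Definition exp_reward (K : nat -> kernel) (pi : S -> A -> R) (u : S -> A -> R)
    (s0 : S) (t : nat) : R :=
  \sum_(s : S) state_dist K pi s0 t s * \sum_(a : A) pi s a * u s a.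

Definition disc_return (gamma : R) (K : nat -> kernel) (pi : S -> A -> R)
    (u : S -> A -> R) (s0 : S) : R :=
  limn (series (fun t => gamma ^+ t * exp_reward K pi u s0 t) : R^nat).

Definition robust_value (gamma : R) (Pset : S -> A -> set (S -> R))
    (pi : S -> A -> R) (u : S -> A -> R) : S -> R :=
  fun s => inf [set disc_return gamma K pi u s | K in in_rect_seq Pset].

Definition supnorm (v : S -> R) : R := \big[Num.max/0]_(s : S) `|v s|.

Definition consistency_op := (S -> A -> R) -> (S -> R) -> (S -> R).

Definition linear_consistency (T : consistency_op) : Prop :=
  exists f : (S -> R) -> S -> A -> R,
    forall pi, is_policy pi -> forall v s, T pi v s = \sum_(a : A) pi s a * f v s a.

Definition contraction (gamma : R) (F : (S -> R) -> S -> R) : Prop :=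
  forall v w, supnorm (fun s => F v s - F w s) <= gamma * supnorm (fun s => v s - w s).

Definition contraction_to_target (gamma : R) (Pset : S -> A -> set (S -> R))
    (r g : S -> A -> R) (lam : R) (T : consistency_op) : Prop :=
  forall pi, is_policy pi ->
    let target := fun s => robust_value gamma Pset pi r s - lam * robust_value gamma Pset pi g s in
    contraction gamma (T pi) /\ T pi target = target /\
    (forall v, T pi v = v -> v = target).

End DRCMDP.

(** A linear consistency operator computes [T^pi v] at a state [s] from
    [pi[s,.]] alone, so two policies that agree at [s] give the same value
    there.  If their fixed points [v1], [v2] differ only at [s], contraction
    gives [|v1 s - v2 s| <= gamma * |v1 s - v2 s|], forcing [v1 s = v2 s].
    But [V_r] and [V_g] are worst cases over the adversary taken separately,
    so [V_r - V_g] at a state is not determined by [r - g] at its successors: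
    in a one-step game where the adversary picks one of two branches, changing
    the action at one branch keeps [r - g] there, hence the target everywhere
    except at the start, while moving [V_r - V_g] at the start from [0] to
    [gamma]. *)

From Pilot Require Import Defs.
From HB Require Import structures.
From mathcomp Require Import all_boot all_order all_algebra.
From mathcomp Require Import all_classical all_reals all_analysis.
From mathcomp Require Import lra.

Import Order.TTheory GRing.Theory Num.Theory numFieldNormedType.Exports.
Local Open Scope classical_set_scope.
Local Open Scope ring_scope.

Section SupNorm.
Context {R : realType} {S : finType}.

Lemma ler_supnorm (w : S -> R) s : `|w s| <= supnorm w.
Proof. by rewrite /supnorm (bigD1 s) //= le_max lexx. Qed.

Lemma supnorm_le (w : S -> R) c : 0 <= c -> (forall s, `|w s| <= c) -> supnorm w <= c.
Proof.
move=> c_ge0 w_le; rewrite /supnorm; apply: (big_ind (fun y => y <= c)) => //.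
by move=> x y xc yc; rewrite ge_max xc yc.
Qed.

End SupNorm.

Section LinearConsistency.
Context {R : realType} {S A : finType}.
Implicit Types (T : @consistency_op R S A) (pi : S -> A -> R) (v : S -> R).

Lemma linear_consistency_local T pi1 pi2 v s :
  linear_consistency T -> is_policy pi1 -> is_policy pi2 -> pi1 s = pi2 s ->
  T pi1 v s = T pi2 v s.
Proof. by move=> [f Tf] pi1P pi2P eq_pi; rewrite !Tf // eq_pi. Qed.

Lemma linear_contraction_fixpoints_agree {gamma : R} {T pi1 pi2 v1 v2 s0} :
  gamma < 1 -> linear_consistency T -> is_policy pi1 -> is_policy pi2 ->
  pi1 s0 = pi2 s0 -> Defs.contraction gamma (T pi1) ->
  T pi1 v1 = v1 -> T pi2 v2 = v2 -> (forall s, s != s0 -> v1 s = v2 s) ->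
  v1 s0 = v2 s0.
Proof.
move=> gamma_lt1 linT pi1P pi2P eq_pi contrT fix1 fix2 eq_off.
have T12 : T pi1 v2 s0 = v2 s0.
  by rewrite (linear_consistency_local _ _ _ v2 s0 linT pi1P pi2P eq_pi) fix2.
have norm_diff : supnorm (fun s => v1 s - v2 s) <= `|v1 s0 - v2 s0|.
  apply: supnorm_le => // s; have [-> //|ne_s] := eqVneq s s0.
  by rewrite eq_off // subrr normr0.
have N_ge0 : 0 <= supnorm (fun s => v1 s - v2 s).
  exact: le_trans (normr_ge0 _) (ler_supnorm _ s0).
have : `|v1 s0 - v2 s0| <= gamma * supnorm (fun s => v1 s - v2 s).
  rewrite -{1}fix1 -{1}T12.
  exact: le_trans (ler_supnorm (fun s => T pi1 v1 s - T pi1 v2 s) s0) (contrT v1 v2).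
move=> le_gamma; apply/eqP; rewrite -subr_eq0 -normr_eq0 eq_le normr_ge0 andbT.
have [gamma_ge0|gamma_lt0] := leP 0 gamma.
  have := ler_wpM2l gamma_ge0 norm_diff; nra.
by have := mulr_le0_ge0 (ltW gamma_lt0) N_ge0; lra.
Qed.

End LinearConsistency.

Section PointMass.
Context {R : realType} {T : finType}.

Definition delta (x : T) : T -> R := fun y => (y == x)%:R.

Lemma sum_delta_mull (x : T) (F : T -> R) : \sum_y delta x y * F y = F x.
Proof.
rewrite (bigD1 x) //= /delta eqxx mul1r big1 ?addr0 // => y /negbTE ->.
by rewrite mul0r.
Qed.

Lemma delta_dist (x : T) : is_dist (delta x).
Proof.
split=> [y|]; first by rewrite /delta ler0n.
by rewrite -[RHS](sum_delta_mull x (fun _ => 1)); apply: eq_bigr => y _; rewrite mulr1.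
Qed.

End PointMass.

Section DeterministicPolicy.
Context {R : realType} {S A : finType}.
Variables (K : nat -> @Defs.kernel R S A) (d : S -> A).

Definition det_policy : S -> A -> R := fun s => delta (d s).

Lemma det_policy_is_policy : is_policy det_policy.
Proof. by move=> s; exact: delta_dist. Qed.

Lemma state_dist_det_succ s0 t x : state_dist K det_policy s0 t = delta x ->
  state_dist K det_policy s0 t.+1 = K t x (d x).
Proof.
move=> dist_t; apply/funext => y /=; rewrite dist_t sum_delta_mull.
exact: (sum_delta_mull (d x) (fun a => K t x a y)).
Qed.

Lemma exp_reward_det u s0 t x : state_dist K det_policy s0 t = delta x ->
  exp_reward K det_policy u s0 t = u x (d x).
Proof.
move=> dist_t; rewrite /exp_reward dist_t sum_delta_mull.
exact: (sum_delta_mull (d x) (u x)).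
Qed.

End DeterministicPolicy.

Arguments state_dist_det_succ {R S A K d s0 t x}.
Arguments exp_reward_det {R S A K d} u {s0 t x}.

Lemma limn_series_eventually0 {R : realType} (u : R^nat) N :
  (forall n, (N <= n)%N -> u n = 0) -> limn (series u) = \sum_(0 <= k < N) u k.
Proof.
move=> u_eq0; apply: norm_lim_near_cst; near=> n.
have Nn : (N <= n)%N by near: n; exists N.
rewrite /series /= (big_cat_nat (leq0n N) Nn) /= [X in _ + X]big1_seq ?addr0 //.
by move=> k /andP [_]; rewrite mem_index_iota => /andP [/u_eq0].
Unshelve. all: by end_near.
Qed.

Lemma inf_set2 {R : realType} (a b : R) : inf [set a; b] = Num.min a b.
Proof.
have lb_min : lbound [set a; b] (Num.min a b).
  by move=> e [->|->]; rewrite ge_min lexx ?orbT.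
apply/le_anti/andP; split; last by apply: lb_le_inf => //; exists a; left.
apply: ge_inf; first by exists (Num.min a b).
by rewrite minEle; case: ifP; [left|right].
Qed.

Section AdversarialChain.
Context {R : realType}.

Definition state := option (option bool).
Definition start : state := None.
Definition sink : state := Some None.
Definition branch (b : bool) : state := Some (Some b).

Definition adversary_set (s : state) (a : bool) : set (state -> R) :=
  if s == start then [set delta (branch b) | b in setT] else [set delta sink].

Definition adversary (b : bool) : nat -> @Defs.kernel R state bool :=
  fun _ s _ => if s == start then delta (branch b) else delta sink.

Lemma adversary_set_neq0 s a : adversary_set s a !=set0.
Proof. by exists (adversary true 0 s a); rewrite /adversary_set /adversary; case: ifP. Qed.

Lemma adversary_set_dist s a p : adversary_set s a p -> is_dist p.
Proof. by rewrite /adversary_set; case: ifP => _ => [[b _ <-]|->]; exact: delta_dist. Qed.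

Lemma adversary_in_rect_seq b : in_rect_seq adversary_set (adversary b).
Proof. by move=> t s a; rewrite /adversary_set /adversary; case: ifP => //; exists b. Qed.

Variables (gamma : R) (d : state -> bool) (u : state -> bool -> R).
Hypotheses (u_start : forall a, u start a = 0) (u_sink : forall a, u sink a = 0).

Section FixedKernels.
Variable K : nat -> @Defs.kernel R state bool.
Hypothesis K_rect : in_rect_seq adversary_set K.

Lemma kernel_nonstart t s a : s != start -> K t s a = delta sink.
Proof. by move=> /negbTE s_ne; have := K_rect t s a; rewrite /adversary_set s_ne. Qed.

Lemma kernel_start t a : exists b, K t start a = delta (branch b).
Proof. by have := K_rect t start a; rewrite /adversary_set eqxx => -[b _ <-]; exists b. Qed.

Lemma state_dist_absorbed s0 t s : s != start ->
  state_dist K (det_policy d) s0 t = delta s ->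
  forall n, (t < n)%N -> state_dist K (det_policy d) s0 n = delta sink.
Proof.
move=> s_ne dist_t; elim=> // n IHn; rewrite ltnS leq_eqVlt => /orP [/eqP <-|/IHn dist_n].
  by rewrite (state_dist_det_succ dist_t) kernel_nonstart.
by rewrite (state_dist_det_succ dist_n) kernel_nonstart.
Qed.

Lemma disc_return_nonstart s : s != start ->
  disc_return gamma K (det_policy d) u s = u s (d s).
Proof.
move=> s_ne; have dist_0 : state_dist K (det_policy d) s 0 = delta s by [].
rewrite /disc_return (@limn_series_eventually0 _ _ 1).
  by rewrite big_nat1 expr0 mul1r (exp_reward_det u dist_0).
move=> [//|n] _; rewrite (exp_reward_det u (x:=sink)) ?u_sink ?mulr0 //.
exact: (state_dist_absorbed _ _ _ s_ne dist_0).
Qed.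

Lemma disc_return_start b : K 0 start (d start) = delta (branch b) ->
  disc_return gamma K (det_policy d) u start = gamma * u (branch b) (d (branch b)).
Proof.
move=> K_start; have dist_0 : state_dist K (det_policy d) start 0 = delta start by [].
have dist_1 := state_dist_det_succ dist_0; rewrite K_start in dist_1.
rewrite /disc_return (@limn_series_eventually0 _ _ 2).
  rewrite big_nat_recr //= big_nat1 expr0 mul1r expr1.
  by rewrite (exp_reward_det _ dist_0) u_start add0r (exp_reward_det _ dist_1).
move=> [|[|n]] // _; rewrite (exp_reward_det u (x:=sink)) ?u_sink ?mulr0 //.
exact: (state_dist_absorbed _ _ _ _ dist_1).
Qed.

End FixedKernels.

Lemma robust_value_nonstart s : s != start ->
  robust_value gamma adversary_set (det_policy d) u s = u s (d s).
Proof.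
move=> s_ne; rewrite /robust_value -[RHS]inf1; congr inf.
apply/seteqP; split=> [_ [K K_rect <-]|_ ->]; first exact: disc_return_nonstart.
by exists (adversary true); rewrite ?disc_return_nonstart //; exact: adversary_in_rect_seq.
Qed.

Lemma robust_value_start :
  robust_value gamma adversary_set (det_policy d) u start =
  Num.min (gamma * u (branch true) (d (branch true)))
          (gamma * u (branch false) (d (branch false))).
Proof.
rewrite /robust_value -inf_set2; congr inf; apply/seteqP; split.
  move=> _ [K K_rect <-]; have [[] K_start] := kernel_start _ K_rect 0 (d start).
    by left; exact: disc_return_start.
  by right; exact: disc_return_start.
have adversary_return b : disc_return gamma (adversary b) (det_policy d) u start =
    gamma * u (branch b) (d (branch b)).
  by apply: (disc_return_start _ (adversary_in_rect_seq b)); rewrite /adversary eqxx.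
move=> _ [|] ->; [exists (adversary true)|exists (adversary false)];
  by rewrite ?adversary_return //; exact: adversary_in_rect_seq.
Qed.

End AdversarialChain.

Section Counterexample.
Context {R : realType}.

Definition reward_r (s : state) (a : bool) : R :=
  if s == branch false then 1 else if (s == branch true) && ~~ a then 2 else 0.

Definition reward_g (s : state) (a : bool) : R :=
  if (s == branch true) && ~~ a then 2 else 0.

Lemma reward_r_ge0 s a : 0 <= reward_r s a.
Proof. by rewrite /reward_r; do 2?case: ifP => _. Qed.

Lemma reward_g_ge0 s a : 0 <= reward_g s a.
Proof. by rewrite /reward_g; case: ifP. Qed.

Definition act_true : state -> bool := fun _ => true.
Definition act_switch : state -> bool := fun s => s != branch true.

(* The target of [contraction_to_target] at [lam = 1], in the same syntactic form. *)
Definition target (d : state -> bool) : state -> R := fun s =>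
  robust_value 2^-1 adversary_set (det_policy d) reward_r s -
  1 * robust_value 2^-1 adversary_set (det_policy d) reward_g s.

Lemma target_nonstart s : s != start -> target act_true s = target act_switch s.
Proof.
move=> s_ne; rewrite /target !robust_value_nonstart //.
by case: s s_ne => [[[]|]|] // _; rewrite /reward_r /reward_g /= !mul1r !subrr.
Qed.

Lemma target_start_act_true : target act_true start = 0.
Proof.
by rewrite /target !robust_value_start //= /reward_r /reward_g /= !mulr0 mulr1 minxx min_l; lra.
Qed.

Lemma target_start_act_switch : target act_switch start = 2^-1.
Proof.
rewrite /target !robust_value_start //= /reward_r /reward_g /= !mulr0 mulr1.
by rewrite !min_r; lra.
Qed.

End Counterexample.

Theorem theorem2 (R : realType) :
  exists (S A : finType) (gamma : R) (Pset : S -> A -> set (S -> R))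
         (r g : S -> A -> R),
    0 <= gamma < 1 /\
    (forall s a, Pset s a !=set0) /\
    (forall s a p, Pset s a p -> is_dist p) /\
    (forall s a, 0 <= r s a) /\
    (forall s a, 0 <= g s a) /\
        ~ (forall lam : R, 0 <= lam ->
             exists T : @consistency_op R S A,
               linear_consistency T /\ contraction_to_target gamma Pset r g lam T).
Proof.
exists state, bool, 2^-1, adversary_set, reward_r, reward_g.
have gamma_lt1 : (2^-1 : R) < 1 by lra.
split; first by apply/andP; split; lra.
split; first exact: adversary_set_neq0.
split; first exact: adversary_set_dist.
split; first exact: reward_r_ge0.
split; first exact: reward_g_ge0.
move=> /(_ 1 ler01) [T [linT T_target]].
have [contr_true [fix_true _]] := T_target _ (det_policy_is_policy act_true).
have [_ [fix_switch _]] := T_target _ (det_policy_is_policy act_switch).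
have := linear_contraction_fixpoints_agree gamma_lt1 linT
  (det_policy_is_policy act_true) (det_policy_is_policy act_switch)
  (s0 := start) erefl contr_true fix_true fix_switch target_nonstart.
rewrite -/(target act_true start) -/(target act_switch start).
by rewrite target_start_act_true target_start_act_switch; lra.
Qed.
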